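(* Let $n,r\ge 1$ and let $\mathcal{A}\subseteq \mathcal{I}^{(r)}(K_n^* )$ be an intersecting family. Then there exists an intersecting family $\mathcal{B}\subseteq\mathcal{I}^{(r)}(K_n^* )$ such that (1) $|\mathcal{A}|=|\mathcal{B}|$, and (2) for all $B_1,B_2\in\mathcal{B}$, $B_1\cap B_2\not\subseteq \{x_1,\dots,x_n\}=V(K_n)$.
   Context: $\mathcal{I}^{(r)}(G)$ denotes the family of all independent $r$-sets (sets of $r$ pairwise non-adjacent vertices) of a graph $G$. A family of sets is intersecting if every two of its members have nonempty intersection. For a graph $G$ with vertices $x_1,\dots,x_n$, the pendant graph $G^*$ has vertex set $\{x_1,\dots,x_n\}\sqcup\{p_1,\dots,p_n\}$ and edge set $E(G)\sqcup\{x_1p_1,\dots,x_np_n\}$; $K_n^*$ is the pendant graph of the complete graph $K_n$ on $x_1,\dots,x_n$. *)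

From mathcomp Require Import all_boot.
Set Implicit Arguments. Unset Strict Implicit. Unset Printing Implicit Defensive.

(* Vertices of the pendant graph K_n^* : inl i = x_i (clique vertex), inr i = p_i (pendant). *)
Definition pvert (n : nat) : finType := ('I_n + 'I_n)%type.

Definition Knstar_adj (n : nat) (u v : pvert n) : bool :=
  match u, v with
  | inl i, inl j => i != j
  | inl i, inr j => i == j
  | inr i, inl j => i == j
  | inr _, inr _ => false
  end.

Definition independent (T : finType) (e : rel T) (S : {set T}) : bool :=
  [forall x in S, forall y in S, ~~ e x y].

Definition indep_rsets (T : finType) (e : rel T) (r : nat) : {set {set T}} :=
  [set S : {set T} | independent e S && (#|S| == r)].

Definition intersecting (T : finType) (F : {set {set T}}) : bool :=
  [forall A in F, forall B in F, A :&: B != set0].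

Definition clique_part (n : nat) : {set pvert n} := [set v : pvert n | if v is inl _ then true else false].

From mathcomp Require Import all_boot.
Set Implicit Arguments. Unset Strict Implicit. Unset Printing Implicit Defensive.

(* Proof idea: a compression argument.  For a clique vertex x_i, the shift
   sh_i replaces x_i by its pendant p_i in an independent set containing x_i;
   since p_i is adjacent only to x_i, the result is again independent, of the
   same size, and (because an independent set of K_n^* has at most one clique
   vertex) it avoids the clique entirely.  Compressing a family B at i shifts
   exactly those members S containing x_i whose shift is not already in B.
   The compressed family has the same size, stays intersecting and uniform,
   and any two shifted members share p_i.  If two members B1, B2 of B meet
   only inside the clique, they share some x_i, and B1 is then shifted by the
   compression at i, which strictly lowers the number of members meeting the
   clique.  Hence a family with the same size as A, intersecting, uniform and
   with the fewest members meeting the clique has the required property. *)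

Section PendantClique.
Variable n : nat.
Local Notation V := (pvert n).
Local Notation adj := (@Knstar_adj n).

Lemma independentP (S : {set V}) :
  reflect (forall x y, x \in S -> y \in S -> ~~ adj x y) (independent adj S).
Proof.
apply: (iffP forall_inP) => [H x y xS yS | H x xS].
  by move/forall_inP: (H x xS) => /(_ y yS).
by apply/forall_inP => y yS; apply: H.
Qed.

Lemma intersectingP (F : {set {set V}}) :
  reflect (forall S T, S \in F -> T \in F -> S :&: T != set0) (intersecting F).
Proof.
apply: (iffP forall_inP) => [H S T SF TF | H S SF].
  by move/forall_inP: (H S SF) => /(_ T TF).
by apply/forall_inP => T TF; apply: H.
Qed.

Lemma pendant_notin i (S : {set V}) :
  independent adj S -> inl i \in S -> inr i \notin S.
Proof.
by move=> /independentP indS xS; apply/negP => pS; have := indS _ _ xS pS; rewrite /= eqxx.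
Qed.

Lemma clique_vertex_unique i (S : {set V}) y :
  independent adj S -> inl i \in S -> y \in S -> y \in clique_part n -> y = inl i.
Proof.
move=> /independentP indS xS; case: y => [j|j] yS; rewrite inE // => _.
by case: (eqVneq j i) => [->//|ne]; have := indS _ _ xS yS; rewrite /= eq_sym ne.
Qed.

Definition shift (i : 'I_n) (S : {set V}) : {set V} := inr i |: (S :\ inl i).

Lemma in_shift i S y : (y \in shift i S) = (y == inr i) || ((y != inl i) && (y \in S)).
Proof. by rewrite !inE. Qed.

Section ShiftOfIndependent.
Variables (i : 'I_n) (S : {set V}).
Hypotheses (indS : independent adj S) (xS : inl i \in S).

Lemma shift_independent : independent adj (shift i S).
Proof.
apply/independentP => x y; rewrite !in_shift.
case/orP => [/eqP->|/andP[nx xS']]; case/orP => [/eqP->|/andP[ny yS']] //=.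
- by case: y ny yS' => [j|j] //= ny _; apply: contra ny => /eqP->.
- exact: (independentP _ indS).
Qed.

Lemma card_shift : #|shift i S| = #|S|.
Proof.
rewrite cardsU1 (cardsD1 (inl i) S) xS add1n !inE.
by rewrite (negbTE (pendant_notin indS xS)) andbF.
Qed.

Lemma shift_avoids_clique y : y \in shift i S -> y \notin clique_part n.
Proof.
rewrite in_shift; case/orP => [/eqP->|/andP[ny yS]]; first by rewrite inE.
by apply/negP => yc; rewrite (clique_vertex_unique indS xS yS yc) eqxx in ny.
Qed.

Lemma shiftK : inl i |: (shift i S :\ inr i) = S.
Proof.
apply/setP => y; rewrite !inE.
case: (eqVneq y (inl i)) => [->|_] /=; first by rewrite xS.
by case: (eqVneq y (inr i)) => [->|] //=; rewrite (negbTE (pendant_notin indS xS)).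
Qed.

End ShiftOfIndependent.

Definition clique_weight (B : {set {set V}}) : nat :=
  #|[set S in B | S :&: clique_part n != set0]|.

Section Compression.
Variables (i : 'I_n) (B : {set {set V}}).
Hypothesis indB : forall S, S \in B -> independent adj S.
Hypothesis intB : intersecting B.

Definition moved : {set {set V}} := [set S in B | (inl i \in S) && (shift i S \notin B)].
Definition compression : {set {set V}} := (B :\: moved) :|: [set shift i S | S in moved].

Lemma movedP S :
  S \in moved -> [/\ S \in B, inl i \in S, shift i S \notin B & independent adj S].
Proof. by rewrite inE => /andP[SB /andP[xS nS]]; split => //; apply: indB. Qed.

Lemma compression_rsets r :
  B \subset indep_rsets adj r -> compression \subset indep_rsets adj r.
Proof.
move=> Br; apply/subsetP => S; rewrite inE => /orP[|/imsetP[T TD ->]].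
  by rewrite inE => /andP[_ SB]; apply: (subsetP Br).
have [TB xT _ indT] := movedP TD.
move/(subsetP Br): TB; rewrite !inE => /andP[_ cT].
by rewrite shift_independent // card_shift.
Qed.

Lemma shift_meets_kept S T : S \in moved -> T \in B :\: moved -> shift i S :&: T != set0.
Proof.
move=> SD; rewrite inE => /andP[TnD TB].
have [SB xS _ indS] := movedP SD.
have meet_off_xi y : y \in S -> y \in T -> y != inl i -> shift i S :&: T != set0.
  by move=> yS yT ny; apply/set0Pn; exists y; rewrite inE in_shift ny yS yT orbT.
case: (boolP (inl i \in T)) => xT.
  have sTB : shift i T \in B by apply: contraR TnD => h; rewrite inE TB xT h.
  have [y] := set0Pn _ (intersectingP _ intB _ _ SB sTB).
  rewrite inE in_shift => /andP[yS /orP[/eqP yp|/andP[ny yT]]]; last exact: meet_off_xi y yS yT ny.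
  by move: (pendant_notin indS xS); rewrite -yp yS.
have [y] := set0Pn _ (intersectingP _ intB _ _ SB TB); rewrite inE => /andP[yS yT].
apply: (meet_off_xi y yS yT); apply: contraNneq xT => <-; exact: yT.
Qed.

Lemma compression_intersecting : intersecting compression.
Proof.
apply/intersectingP => S T; rewrite !in_setU.
case/orP => [SBD|/imsetP[S' S'D ->]]; case/orP => [TBD|/imsetP[T' T'D ->]].
- by move: SBD TBD; rewrite !in_setD => /andP[_ SB] /andP[_ TB]; apply: (intersectingP _ intB).
- by rewrite setIC; apply: shift_meets_kept.
- exact: shift_meets_kept.
- by apply/set0Pn; exists (inr i); rewrite !inE !eqxx.
Qed.

Lemma card_compression : #|compression| = #|B|.
Proof.
have disj : (B :\: moved) :&: [set shift i S | S in moved] = set0.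
  apply/setP => S; rewrite !inE; apply/negP => /andP[/andP[_ SB] /imsetP[T TD eS]].
  by have [_ _ nT _] := movedP TD; rewrite -eS SB in nT.
have shift_inj : {in moved &, injective (shift i)}.
  move=> S T SD TD e; have [_ xS _ iS] := movedP SD; have [_ xT _ iT] := movedP TD.
  by rewrite -(shiftK iS xS) -(shiftK iT xT) e.
have DB : moved \subset B by apply/subsetP => S /movedP[].
rewrite cardsU disj cards0 subn0 card_in_imset //.
by rewrite -(cardsID moved B) (setIidPr DB) addnC.
Qed.

Lemma compression_weight S0 : S0 \in moved -> clique_weight compression < clique_weight B.
Proof.
move=> S0D; have [S0B xS0 _ indS0] := movedP S0D.
apply: proper_card; apply/properP; split.
  apply/subsetP => S; rewrite !inE => /andP[/orP[/andP[_ SB] Sc|/imsetP[T TD eS] Sc]].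
    by rewrite SB.
  have [_ xT _ indT] := movedP TD.
  have [y] := set0Pn _ Sc; rewrite inE eS => /andP[yS yc].
  by rewrite (negbTE (shift_avoids_clique indT xT yS)) in yc.
exists S0; first by rewrite inE S0B; apply/set0Pn; exists (inl i); rewrite !inE xS0.
rewrite inE negb_and in_setU in_setD S0D /=; apply/orP; left; apply/imsetP => -[T TD eT].
have [_ xT _ indT] := movedP TD.
by have := shift_avoids_clique indT xT (y := inl i); rewrite -eT xS0 inE => /(_ isT).
Qed.

(* If two members share x_i and meet only inside the clique, the first is moved:
   its shift would meet the second only outside the clique, which is impossible. *)
Lemma clique_pair_moved B1 B2 :
  B1 \in B -> B2 \in B -> inl i \in B1 :&: B2 -> B1 :&: B2 \subset clique_part n ->
  B1 \in moved.
Proof.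
move=> B1B B2B; rewrite inE => /andP[xB1 xB2] sub.
rewrite inE B1B xB1 /=; apply/negP => sB.
have [y] := set0Pn _ (intersectingP _ intB _ _ sB B2B).
rewrite inE in_shift => /andP[/orP[/eqP->|/andP[ny yB1]] yB2].
  by move: (pendant_notin (indB B2B) xB2); rewrite yB2.
have yc : y \in clique_part n by apply: (subsetP sub); rewrite inE yB1.
by rewrite (clique_vertex_unique (indB B1B) xB1 yB1 yc) eqxx in ny.
Qed.

End Compression.

Lemma compress_clique_pair r (B : {set {set V}}) B1 B2 :
  B \subset indep_rsets adj r -> intersecting B -> B1 \in B -> B2 \in B ->
  B1 :&: B2 \subset clique_part n ->
  exists C : {set {set V}},
    [/\ C \subset indep_rsets adj r, intersecting C, #|C| = #|B|
      & clique_weight C < clique_weight B].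
Proof.
move=> Br intB B1B B2B sub.
have indB S : S \in B -> independent adj S.
  by move/(subsetP Br); rewrite inE => /andP[].
have [v v12] := set0Pn _ (intersectingP _ intB _ _ B1B B2B).
case: v v12 (subsetP sub _ v12) => [i|i] v12; rewrite inE // => _.
exists (compression i B); split.
- exact: compression_rsets.
- exact: compression_intersecting.
- exact: card_compression.
- exact: compression_weight (clique_pair_moved indB intB B1B B2B v12 sub).
Qed.

End PendantClique.

Theorem lemma3 (n r : nat) (hn : 1 <= n) (hr : 1 <= r)
  (A : {set {set pvert n}}) :
  A \subset indep_rsets (@Knstar_adj n) r ->
  intersecting A ->
  exists B : {set {set pvert n}},
    [/\ B \subset indep_rsets (@Knstar_adj n) r,
        intersecting B,
        #|A| = #|B| &
        forall B1 B2, B1 \in B -> B2 \in B ->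
          ~~ (B1 :&: B2 \subset clique_part n)].
Proof.
move=> Ar intA.
pose admissible k := [exists B : {set {set pvert n}},
  [&& B \subset indep_rsets (@Knstar_adj n) r, intersecting B,
      #|A| == #|B| & clique_weight B == k]].
have exA : exists k, admissible k.
  by exists (clique_weight A); apply/existsP; exists A; rewrite Ar intA !eqxx.
case: (ex_minnP exA) => k /existsP[B /and4P[Br intB /eqP AB /eqP wB]] minB.
exists B; split => // B1 B2 B1B B2B; apply/negP => sub.
have [C [Cr intC CB wC]] := compress_clique_pair Br intB B1B B2B sub.
have : k <= clique_weight C.
  by apply: minB; apply/existsP; exists C; rewrite Cr intC CB AB !eqxx.
by rewrite -wB leqNgt wC.
Qed.
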